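(* Let $J^r:\mathbb{R}^n\to\mathbb{R}^k$ be twice continuously differentiable and $\epsilon\in[0,\infty)^k$. Let $\bar u\in\varphi^{-1}(0)$ be such that problem $(\mathrm{P}_u)$ with $u=\bar u$ has a unique solution $\bar\alpha\in\Delta_k$ and $\bar\alpha_i>0$ for all $i\in\{1,\dots,k\}$, and suppose that $(\mathrm{P}_u)$ is uniquely solvable for all $u$ in a neighborhood of $\bar u$. Then there is an open set $U\subseteq\mathbb{R}^n$ with $\bar u\in U$ such that $\varphi|_U$ is continuously differentiable.
   Context: $\Delta_k:=\{\alpha\in[0,\infty)^k:\sum_{i=1}^k\alpha_i=1\}$. $DJ^r(u)\in\mathbb{R}^{k\times n}$ is the Jacobian of $J^r$. For $u\in\mathbb{R}^n$ let $\omega_u(\alpha):=\|DJ^r(u)^\top\alpha\|_2^2-(\alpha^\top\epsilon)^2=\alpha^\top\big(DJ^r(u)DJ^r(u)^\top-\epsilon\epsilon^\top\big)\alpha$, and let $(\mathrm{P}_u)$ denote the problem $\min_{\alpha\in\Delta_k}\omega_u(\alpha)$ (a ''solution'' is a minimizer). Define $\varphi:\mathbb{R}^n\to\mathbb{R}$, $\varphi(u):=\min_{\alpha\in\Delta_k}\omega_u(\alpha)$. *)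

From mathcomp Require Import ssreflect ssrfun ssrbool eqtype ssrnat seq fintype bigop.
From Stdlib Require Import Reals ClassicalEpsilon.
Set Implicit Arguments. Unset Strict Implicit. Unset Printing Implicit Defensive.
Local Open Scope R_scope.

Definition vec (n : nat) := 'I_n -> R.

Definition vsum (n : nat) (f : 'I_n -> R) : R := \big[Rplus/0]_(i < n) f i.
Definition dot (n : nat) (x y : vec n) : R := vsum (fun i => x i * y i).
Definition vnorm (n : nat) (x : vec n) : R := sqrt (dot x x).
Definition vadd (n : nat) (x y : vec n) : vec n := fun i => x i + y i.
Definition vsub (n : nat) (x y : vec n) : vec n := fun i => x i - y i.

Definition is_open (n : nat) (U : vec n -> Prop) : Prop :=
  forall u, U u -> exists r, 0 < r /\ forall v, vnorm (vsub v u) < r -> U v.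

Definition continuous_on (n : nat) (U : vec n -> Prop) (g : vec n -> R) : Prop :=
  forall u, U u -> forall eps, 0 < eps -> exists delta, 0 < delta /\
    forall v, U v -> vnorm (vsub v u) < delta -> Rabs (g v - g u) < eps.

Definition has_grad (n : nat) (g : vec n -> R) (u d : vec n) : Prop :=
  forall eps, 0 < eps -> exists delta, 0 < delta /\
    forall h, vnorm h < delta ->
      Rabs (g (vadd u h) - g u - dot d h) <= eps * vnorm h.

Definition C1_on (n : nat) (U : vec n -> Prop) (g : vec n -> R) : Prop :=
  exists dg : vec n -> vec n,
    (forall u, U u -> has_grad g u (dg u)) /\
    (forall i, continuous_on U (fun u => dg u i)).

Definition full (n : nat) : vec n -> Prop := fun _ => True.

Definition is_jacobian (n k : nat) (J : vec n -> vec k) (DJ : vec n -> 'I_k -> 'I_n -> R) : Prop :=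
  forall u j, has_grad (fun v => J v j) u (fun i => DJ u j i).

Definition C2_with_jacobian (n k : nat) (J : vec n -> vec k) (DJ : vec n -> 'I_k -> 'I_n -> R) : Prop :=
  is_jacobian J DJ /\ forall j i, C1_on (@full n) (fun u => DJ u j i).

Definition in_simplex (k : nat) (a : vec k) : Prop :=
  (forall i, 0 <= a i) /\ vsum a = 1.

(* omega_u(alpha) = || DJ(u)^T alpha ||^2 - (alpha^T eps)^2 *)
Definition omega (n k : nat) (DJ : vec n -> 'I_k -> 'I_n -> R) (eps : vec k)
  (u : vec n) (a : vec k) : R :=
  vsum (fun i : 'I_n => (vsum (fun j : 'I_k => DJ u j i * a j)) ^ 2) - (dot a eps) ^ 2.

Definition is_solution (n k : nat) (DJ : vec n -> 'I_k -> 'I_n -> R) (eps : vec k)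
  (u : vec n) (a : vec k) : Prop :=
  in_simplex a /\ forall b, in_simplex b -> omega DJ eps u a <= omega DJ eps u b.

Definition uniquely_solvable (n k : nat) (DJ : vec n -> 'I_k -> 'I_n -> R) (eps : vec k)
  (u : vec n) : Prop :=
  exists a, is_solution DJ eps u a /\
    forall b, is_solution DJ eps u b -> forall i, b i = a i.

Definition is_min_value (n k : nat) (DJ : vec n -> 'I_k -> 'I_n -> R) (eps : vec k)
  (u : vec n) (m : R) : Prop :=
  (exists a, is_solution DJ eps u a /\ omega DJ eps u a = m).

(* phi(u) = min_{alpha in Delta_k} omega_u(alpha) (the minimum exists by compactness
   whenever k >= 1; chosen by classical epsilon) *)
Definition phi (n k : nat) (DJ : vec n -> 'I_k -> 'I_n -> R) (eps : vec k) (u : vec n) : R :=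
  epsilon (inhabits 0) (is_min_value DJ eps u).

(** On a ball around ubar every problem (P_u) has a unique solution A u, so
   phi u = omega_u(A u) there.  The proof is Danskin's argument:
   - omega_u(a) is differentiable in u, uniformly for a in the simplex, with gradient
     omega_grad u a = sum_i 2 (DJ(u)^T a)_i sum_j a_j grad DJ_ji(u)   ([omega_unif_diff]);
   - the solution map A is continuous: solutions at points u_m -> u0 have, by compactness
     of the simplex, a convergent subsequence whose limit solves (P_u0), hence equals
     A u0 by uniqueness   ([solution_cont_within]);
   - comparing the two minimality inequalities for A u0 and A (u0 + h) squeezes the
     increment of phi, so phi has gradient omega_grad u0 (A u0) at u0   ([danskin]);
   - u |-> omega_grad u (A u) is continuous, being polynomial in DJ, grad DJ and A.
   The open set U is a small coordinate box inside the ball. *)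

From HB Require Import structures.
From mathcomp Require Import ssreflect ssrfun ssrbool eqtype ssrnat seq fintype bigop.
From Stdlib Require Import Reals Lra Lia Psatz ClassicalEpsilon FunctionalExtensionality Classical.
From mathcomp Require Import zify.
Set Implicit Arguments. Unset Strict Implicit.
Local Open Scope R_scope.

(** Real addition is a commutative monoid law, so the bigop library applies to [vsum]. *)
HB.instance Definition _ :=
  Monoid.isComLaw.Build R 0 Rplus (fun a b c => esym (Rplus_assoc a b c)) Rplus_comm Rplus_0_l.

Lemma big_term_le (I : finType) (F : I -> R) (i : I) :
  (forall j, 0 <= F j) -> F i <= \big[Rplus/0]_j F j.
Proof.
move=> F_ge0; rewrite (bigD1 i) //=.
have : 0 <= \big[Rplus/0]_(j | j != i) F j.
  by apply: (big_ind (fun x => 0 <= x)) => // [|x y]; lra.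
lra.
Qed.

Lemma vsum_recr n (f : 'I_n.+1 -> R) :
  vsum f = vsum (fun i : 'I_n => f (widen_ord (leqnSn n) i)) + f ord_max.
Proof. by rewrite /vsum big_ord_recr. Qed.

Lemma vsum0 (f : 'I_0 -> R) : vsum f = 0.
Proof. by rewrite /vsum big_ord0. Qed.

Lemma vsum_ext n (f g : 'I_n -> R) : (forall i, f i = g i) -> vsum f = vsum g.
Proof. by move=> fg; rewrite /vsum; apply: eq_bigr => i _. Qed.

Lemma vsum_exch n m (f : 'I_n -> 'I_m -> R) :
  vsum (fun i => vsum (fun j => f i j)) = vsum (fun j => vsum (fun i => f i j)).
Proof. exact: exchange_big. Qed.

Lemma vsum_scal n (f : 'I_n -> R) c : vsum (fun i => c * f i) = c * vsum f.
Proof. by apply: (big_ind2 (fun x y => x = c * y)) => [|x1 x2 y1 y2 -> ->|]; rewrite //; ring. Qed.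

Lemma vsum_scalr n (f : 'I_n -> R) c : vsum (fun i => f i * c) = vsum f * c.
Proof. by apply: (big_ind2 (fun x y => x = y * c)) => [|x1 x2 y1 y2 -> ->|]; rewrite //; ring. Qed.

Lemma vsum_sub n (f g : 'I_n -> R) : vsum (fun i => f i - g i) = vsum f - vsum g.
Proof.
by apply: (big_ind3 (fun x y z => x = y - z)) => [|x1 x2 x3 y1 y2 y3 -> ->|]; rewrite //; ring.
Qed.

Lemma vsum_le n (f g : 'I_n -> R) : (forall i, f i <= g i) -> vsum f <= vsum g.
Proof.
move=> fg; apply: (big_ind2 Rle) => [|x1 x2 y1 y2|i _]; [lra | exact: Rplus_le_compat | exact: fg].
Qed.

Lemma vsum_abs n (f : 'I_n -> R) : Rabs (vsum f) <= vsum (fun i => Rabs (f i)).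
Proof.
apply: (big_ind2 (fun x y => Rabs x <= y)) => [|x1 x2 y1 y2 h1 h2|i _].
- by rewrite Rabs_R0; lra.
- by have := Rabs_triang x1 y1; lra.
- exact: Rle_refl.
Qed.

Lemma vsum_ge0 n (f : 'I_n -> R) : (forall i, 0 <= f i) -> 0 <= vsum f.
Proof. by move=> f_ge0; apply: (big_ind (fun x => 0 <= x)) => // [|x y]; lra. Qed.

Lemma vsum_const n c : vsum (fun _ : 'I_n => c) = INR n * c.
Proof.
rewrite /vsum big_const_ord; elim: n => [|n IH]; first by rewrite /=; ring.
by rewrite iterS IH S_INR; ring.
Qed.

Lemma vnorm_ge0 n (x : vec n) : 0 <= vnorm x.
Proof. exact: sqrt_pos. Qed.

(* Each coordinate is bounded by the norm; this makes coordinate boxes open. *)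
Lemma coord_le_vnorm n (x : vec n) i : Rabs (x i) <= vnorm x.
Proof.
rewrite -sqrt_Rsqr_abs /vnorm /dot /Rsqr; apply: sqrt_le_1_alt.
rewrite /vsum; apply: (@big_term_le _ (fun j => x j * x j) i) => j; exact: Rle_0_sqr.
Qed.

(* The l2 norm is bounded by the l1 norm; this puts coordinate boxes inside balls. *)
Lemma vnorm_le_l1 n (x : vec n) : vnorm x <= vsum (fun i => Rabs (x i)).
Proof.
have l1_ge0 := @vsum_ge0 _ (fun i => Rabs (x i)) (fun i => Rabs_pos _).
rewrite /vnorm /dot -(sqrt_pow2 _ l1_ge0); apply: sqrt_le_1_alt.
elim: n x {l1_ge0} => [|n IH] x; first by rewrite !vsum0; lra.
rewrite !vsum_recr; have := IH (fun i => x (widen_ord (leqnSn n) i)).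
have := @vsum_ge0 _ (fun i => Rabs (x (widen_ord (leqnSn n) i))) (fun i => Rabs_pos _).
have := Rabs_pos (x ord_max); have := Rsqr_abs (x ord_max); rewrite /Rsqr; nra.
Qed.

(* |<d, h>| <= |d|_1 max_i |h_i| <= |d|_1 |h|. *)
Lemma dot_bound n (d h : vec n) : Rabs (dot d h) <= vsum (fun i => Rabs (d i)) * vnorm h.
Proof.
rewrite /dot -vsum_scalr; eapply Rle_trans; first exact: vsum_abs; apply: vsum_le => i.
rewrite Rabs_mult; exact: (Rmult_le_compat_l _ _ _ (Rabs_pos _) (coord_le_vnorm _ _)).
Qed.

Lemma dot_sub n (x y h : vec n) : dot x h - dot y h = dot (fun i => x i - y i) h.
Proof. by rewrite /dot -vsum_sub; apply: vsum_ext => i; ring. Qed.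

Lemma vsub_vadd n (u h : vec n) : vsub (vadd u h) u = h.
Proof. by apply: functional_extensionality => i; rewrite /vsub /vadd; ring. Qed.

Lemma simplex_coord k (a : vec k) j : in_simplex a -> 0 <= a j <= 1.
Proof. by move=> [a_ge0 a_sum]; split => //; rewrite -a_sum /vsum; apply: big_term_le. Qed.

Lemma convex_comb_bound k (a : vec k) (c : 'I_k -> R) M :
  in_simplex a -> (forall j, Rabs (c j) <= M) -> Rabs (vsum (fun j => c j * a j)) <= M.
Proof.
move=> [a_ge0 a_sum] c_le; eapply Rle_trans; first exact: vsum_abs.
rewrite -(Rmult_1_r M) -a_sum -vsum_scal; apply: vsum_le => j.
by rewrite Rabs_mult (Rabs_pos_eq (a j)) //; apply: Rmult_le_compat_r.
Qed.

Lemma fin_upper_bound (I : finType) (f : I -> R) : exists B, 0 <= B /\ forall x, f x <= B.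
Proof.
exists (\big[Rplus/0]_x Rabs (f x)); split.
  by apply: (big_ind (fun y => 0 <= y)) => [|y z|x _]; [lra | lra | exact: Rabs_pos].
move=> x; apply: (Rle_trans _ _ _ (Rle_abs _)).
by apply: (@big_term_le _ (fun y => Rabs (f y)) x) => y; exact: Rabs_pos.
Qed.

Lemma fin_common_radius (I : finType) (P : I -> R -> Prop) :
  (forall x d d', 0 < d' <= d -> P x d -> P x d') ->
  (forall x, exists d, 0 < d /\ P x d) -> exists d, 0 < d /\ forall x, P x d.
Proof.
move=> shrink radius.
suff [d [d_pos Pd]] : exists d, 0 < d /\ forall x, x \in enum I -> P x d.
  by exists d; split => // x; apply: Pd; rewrite mem_enum.
elim: (enum I) => [|y s [d [d_pos Pd]]]; first by exists 1; split => //; lra.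
have [d' [d'_pos Py]] := radius y.
have dd'_pos := Rmin_pos _ _ d_pos d'_pos.
exists (Rmin d d'); split => // x; rewrite in_cons => /orP [/eqP -> | xs].
  by apply: (shrink _ d') => //; split => //; exact: Rmin_r.
by apply: (shrink _ d); [split => //; exact: Rmin_l | exact: Pd].
Qed.

Definition cont_within n (P : vec n -> Prop) (F : vec n -> R) (u0 : vec n) : Prop :=
  forall e, 0 < e -> exists d, 0 < d /\
    forall v, P v -> vnorm (vsub v u0) < d -> Rabs (F v - F u0) < e.

Section ContWithin.
Variables (n : nat) (P : vec n -> Prop) (u0 : vec n).

Lemma cont_within_const c : cont_within P (fun _ => c) u0.
Proof. move=> e e_pos; exists 1; split=> [|v _ _]; [lra | by rewrite Rminus_diag Rabs_R0]. Qed.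

Lemma cont_within_ext (F G : vec n -> R) :
  (forall v, F v = G v) -> cont_within P F u0 -> cont_within P G u0.
Proof.
move=> FG F_cont e e_pos; have [d [d_pos Fd]] := F_cont e e_pos.
by exists d; split=> // v Pv vd; rewrite -!FG; apply: Fd.
Qed.

Lemma cont_within_sub_dom (Q : vec n -> Prop) (F : vec n -> R) :
  (forall v, Q v -> P v) -> cont_within P F u0 -> cont_within Q F u0.
Proof.
move=> QP F_cont e e_pos; have [d [d_pos Fd]] := F_cont e e_pos.
by exists d; split=> // v /QP; apply: Fd.
Qed.

Lemma cont_within_add (F G : vec n -> R) :
  cont_within P F u0 -> cont_within P G u0 -> cont_within P (fun v => F v + G v) u0.
Proof.
move=> F_cont G_cont e e_pos.
have [d1 [d1_pos F1]] := F_cont (e / 2) ltac:(lra).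
have [d2 [d2_pos G2]] := G_cont (e / 2) ltac:(lra).
exists (Rmin d1 d2); split=> [|v Pv vd]; first exact: Rmin_pos.
have := F1 v Pv (Rlt_le_trans _ _ _ vd (Rmin_l _ _)).
have := G2 v Pv (Rlt_le_trans _ _ _ vd (Rmin_r _ _)).
have := Rabs_triang (F v - F u0) (G v - G u0).
have -> : F v - F u0 + (G v - G u0) = F v + G v - (F u0 + G u0) by ring.
lra.
Qed.

Lemma cont_within_mul (F G : vec n -> R) :
  cont_within P F u0 -> cont_within P G u0 -> cont_within P (fun v => F v * G v) u0.
Proof.
move=> F_cont G_cont e e_pos.
pose M := Rabs (F u0) + Rabs (G u0) + 1.
have M_pos : 0 < M by have := Rabs_pos (F u0); have := Rabs_pos (G u0); rewrite /M; lra.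
pose e' := Rmin 1 (e / (2 * M)).
have e'_pos : 0 < e' by apply: Rmin_pos; [lra | apply: Rdiv_lt_0_compat; lra].
have e'_le1 : e' <= 1 by apply: Rmin_l.
have e'M : e' * M <= e / 2.
  have -> : e / 2 = e / (2 * M) * M by field; lra.
  by apply: Rmult_le_compat_r; [lra | exact: Rmin_r].
have [d1 [d1_pos F1]] := F_cont e' e'_pos; have [d2 [d2_pos G2]] := G_cont e' e'_pos.
exists (Rmin d1 d2); split=> [|v Pv vd]; first exact: Rmin_pos.
have Fv := F1 v Pv (Rlt_le_trans _ _ _ vd (Rmin_l _ _)).
have Gv := G2 v Pv (Rlt_le_trans _ _ _ vd (Rmin_r _ _)).
have -> : F v * G v - F u0 * G u0 =
  (F v - F u0) * (G v - G u0) + (F v - F u0) * G u0 + F u0 * (G v - G u0) by ring.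
move: Fv Gv e'M; set a := F v - F u0; set b := G v - G u0 => Fv Gv e'M.
have T1 := Rabs_triang (a * b + a * G u0) (F u0 * b).
have T2 := Rabs_triang (a * b) (a * G u0).
rewrite !Rabs_mult in T1 T2.
have := Rabs_pos a; have := Rabs_pos b; have := Rabs_pos (F u0); have := Rabs_pos (G u0).
rewrite /M in e'M; nra.
Qed.

Lemma cont_within_sub (F G : vec n -> R) :
  cont_within P F u0 -> cont_within P G u0 -> cont_within P (fun v => F v - G v) u0.
Proof.
move=> F_cont G_cont; apply: (cont_within_ext (F := fun v => F v + (-1) * G v)).
  by move=> v; ring.
by apply: cont_within_add => //; apply: cont_within_mul => //; exact: cont_within_const.
Qed.

Lemma cont_within_sum m (F : 'I_m -> vec n -> R) :
  (forall i, cont_within P (F i) u0) -> cont_within P (fun v => vsum (fun i => F i v)) u0.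
Proof.
elim: m F => [|m IH] F F_cont.
  by apply: (cont_within_ext (F := fun _ => 0)) => [v|]; [rewrite vsum0 | exact: cont_within_const].
apply: (cont_within_ext
  (F := fun v => vsum (fun i : 'I_m => F (widen_ord (leqnSn m) i) v) + F ord_max v)).
  by move=> v; rewrite vsum_recr.
by apply: cont_within_add; [apply: IH => i |]; apply: F_cont.
Qed.

Lemma cont_within_abs (F : vec n -> R) :
  cont_within P F u0 -> cont_within P (fun v => Rabs (F v)) u0.
Proof.
move=> F_cont e e_pos; have [d [d_pos Fd]] := F_cont e e_pos.
exists d; split=> // v Pv vd.
exact: (Rle_lt_trans _ _ _ (Rabs_triang_inv2 _ _) (Fd v Pv vd)).
Qed.

Lemma has_grad_cont_within (g : vec n -> R) (dg : vec n) :
  has_grad g u0 dg -> cont_within P g u0.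
Proof.
move=> g_diff e e_pos; have [d1 [d1_pos g1]] := g_diff 1 Rlt_0_1.
pose C := vsum (fun i => Rabs (dg i)) + 1.
have C_pos : 0 < C.
  by have := @vsum_ge0 _ (fun i => Rabs (dg i)) (fun i => Rabs_pos _); rewrite /C; lra.
exists (Rmin d1 (e / C)); split; first by apply: Rmin_pos => //; apply: Rdiv_lt_0_compat.
move=> v _ vd; pose h := vsub v u0.
have -> : v = vadd u0 h by apply: functional_extensionality => i; rewrite /vadd /h /vsub; ring.
have g_h := g1 h (Rlt_le_trans _ _ _ vd (Rmin_l _ _)).
have Ch : C * vnorm h < e.
  have -> : e = C * (e / C) by field; lra.
  exact: (Rmult_lt_compat_l _ _ _ C_pos (Rlt_le_trans _ _ _ vd (Rmin_r _ _))).
have := dot_bound dg h; have := Rabs_triang (g (vadd u0 h) - g u0 - dot dg h) (dot dg h).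
have -> : g (vadd u0 h) - g u0 - dot dg h + dot dg h = g (vadd u0 h) - g u0 by ring.
rewrite /C in Ch; have := vnorm_ge0 h; nra.
Qed.

End ContWithin.

Lemma Un_cv_ext (u w : nat -> R) l : (forall m, u m = w m) -> Un_cv u l -> Un_cv w l.
Proof.
move=> uw u_cv e e_pos; have [N uN] := u_cv e e_pos.
by exists N => m mN; rewrite -uw; apply: uN.
Qed.

Lemma Un_cv_const c : Un_cv (fun _ => c) c.
Proof. by move=> e e_pos; exists O => m _; rewrite /Rdist Rminus_diag Rabs_R0. Qed.

Lemma Un_cv_vsum m (F : 'I_m -> nat -> R) (L : 'I_m -> R) :
  (forall i, Un_cv (F i) (L i)) -> Un_cv (fun p => vsum (fun i => F i p)) (vsum L).
Proof.
elim: m F L => [|m IH] F L F_cv.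
  rewrite vsum0; apply: (Un_cv_ext (u := fun _ => 0)) => [p|]; first by rewrite vsum0.
  exact: Un_cv_const.
rewrite vsum_recr; apply: (Un_cv_ext
  (u := fun p => vsum (fun i : 'I_m => F (widen_ord (leqnSn m) i) p) + F ord_max p)).
  by move=> p; rewrite vsum_recr.
by apply: CV_plus; [apply: IH => i |]; apply: F_cv.
Qed.

Lemma Un_cv_sq (u : nat -> R) l : Un_cv u l -> Un_cv (fun m => u m ^ 2) (l ^ 2).
Proof.
move=> u_cv; have -> : l ^ 2 = l * l by ring.
by apply: (Un_cv_ext (u := fun m => u m * u m)) => [m|]; [ring | exact: CV_mult].
Qed.

Lemma Un_cv_le (u w : nat -> R) l1 l2 :
  (forall m, u m <= w m) -> Un_cv u l1 -> Un_cv w l2 -> l1 <= l2.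
Proof.
move=> uw u_cv w_cv; apply: Rnot_lt_le => l21.
have [N HN] := CV_minus _ _ _ _ w_cv u_cv (l1 - l2) ltac:(lra).
have := HN N (le_n N); have := uw N; rewrite /Rdist => u_le d_lt.
have := Rle_abs (w N - u N - (l2 - l1)); have := Rabs_minus_sym (w N - u N) (l2 - l1); lra.
Qed.

Definition extraction (psi : nat -> nat) : Prop := forall m, (psi m < psi m.+1)%nat.

Lemma extraction_ge psi : extraction psi -> forall m, (m <= psi m)%nat.
Proof. by move=> psi_incr; elim=> [|m IH]; [lia | have := psi_incr m; lia]. Qed.

Lemma extraction_comp phi psi :
  extraction phi -> extraction psi -> extraction (fun m => phi (psi m)).
Proof.
move=> phi_incr psi_incr m.
suff phi_mono : forall a b, (a <= b)%nat -> (phi a <= phi b)%nat.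
  by have := phi_incr (psi m); have := phi_mono _ _ (psi_incr m); lia.
move=> a b; elim: b => [|b IH] ab; first by have -> : a = O by lia.
by case: (Nat.eq_dec a b.+1) => [-> | ne]; [lia | have := phi_incr b; have := IH ltac:(lia); lia].
Qed.

Lemma Un_cv_extraction (u : nat -> R) l psi :
  extraction psi -> Un_cv u l -> Un_cv (fun m => u (psi m)) l.
Proof.
move=> psi_incr u_cv e e_pos; have [N uN] := u_cv e e_pos.
by exists N => m mN; apply: uN; have := extraction_ge psi_incr m; lia.
Qed.

Lemma cluster_value_extraction (u : nat -> R) l :
  ValAdh u l -> exists psi, extraction psi /\ Un_cv (fun m => u (psi m)) l.
Proof.
move=> u_adh.
have inv_pos m : 0 < / INR m.+1 by apply: Rinv_0_lt_compat; apply: lt_0_INR; lia.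
have [c c_spec] : exists c : nat -> nat -> nat,
    forall m N, (N <= c m N)%nat /\ Rabs (u (c m N) - l) < / INR m.+1.
  have [f f_spec] := choice (fun (mN : nat * nat) p =>
    (mN.2 <= p)%nat /\ Rabs (u p - l) < / INR mN.1.+1) (fun '(m, N) =>
    let: ex_intro p (conj pN up) := u_adh (disc l (mkposreal _ (inv_pos m))) N
      (ex_intro _ (mkposreal _ (inv_pos m)) (fun y yl => yl)) in
    ex_intro _ p (conj (introT leP pN) up)).
  by exists (fun m N => f (m, N)) => m N; apply: (f_spec (m, N)).
pose psi := fix psi m := if m is m'.+1 then c m (psi m').+1 else c O O.
exists psi; split; first by move=> m; have := (c_spec m.+1 (psi m).+1).1; rewrite /=; lia.
move=> e e_pos; have [N [NE N_pos]] := archimed_cor1 e e_pos; exists N => m mN.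
have psi_m : Rabs (u (psi m) - l) < / INR m.+1 by case: m {mN} => [|m] /=; exact: (c_spec _ _).2.
apply: (Rlt_le_trans _ _ _ psi_m); apply: Rle_trans (Rlt_le _ _ NE).
by apply: Rinv_le_contravar; [apply: lt_0_INR; lia | apply: le_INR; lia].
Qed.

Lemma unit_cube_extraction k (x : nat -> vec k) :
  (forall m j, 0 <= x m j <= 1) ->
  exists (psi : nat -> nat) (beta : vec k),
    extraction psi /\ forall j, Un_cv (fun m => x (psi m) j) (beta j).
Proof.
move=> x_cube.
suff [psi [beta [psi_incr cv]]] : exists (psi : nat -> nat) (beta : vec k),
    extraction psi /\ forall j, j \in enum 'I_k -> Un_cv (fun m => x (psi m) j) (beta j).
  by exists psi, beta; split => // j; apply: cv; rewrite mem_enum.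
elim: (enum 'I_k) => [|j0 s [psi [beta [psi_incr cv]]]].
  by exists (fun m => m), (fun _ => 0); split => // m; lia.
have [l l_adh] :=
  Bolzano_Weierstrass (fun m => x (psi m) j0) _ (compact_P3 0 1) (fun m => x_cube _ _).
have [phi [phi_incr cv0]] := cluster_value_extraction l_adh.
exists (fun m => psi (phi m)), (fun j => if j == j0 then l else beta j).
split; first exact: extraction_comp.
move=> j; rewrite in_cons; case: (eqVneq j j0) => [-> _ | _ /= js]; first exact: cv0.
exact: (Un_cv_extraction phi_incr (cv j js)).
Qed.

Lemma cont_within_seq n (P : vec n -> Prop) (F : vec n -> R) u0 (w : nat -> vec n) :
  cont_within P F u0 -> (forall m, P (w m)) ->
  Un_cv (fun m => vnorm (vsub (w m) u0)) 0 -> Un_cv (fun m => F (w m)) (F u0).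
Proof.
move=> F_cont Pw w_cv e e_pos; have [d [d_pos Fd]] := F_cont e e_pos.
have [N wN] := w_cv d d_pos; exists N => m mN; apply: Fd => //.
have := wN m mN; rewrite /Rdist Rminus_0_r Rabs_pos_eq //; exact: vnorm_ge0.
Qed.

Section Problem.
Variables (n k : nat) (DJ : vec n -> 'I_k -> 'I_n -> R) (eps : vec k).

Definition jac_tmul (u : vec n) (a : vec k) (i : 'I_n) : R := vsum (fun j => DJ u j i * a j).

Lemma omega_seq_cont (w : nat -> vec n) (u0 : vec n) (y : nat -> vec k) (beta : vec k) :
  (forall j i, Un_cv (fun m => DJ (w m) j i) (DJ u0 j i)) ->
  (forall j, Un_cv (fun m => y m j) (beta j)) ->
  Un_cv (fun m => omega DJ eps (w m) (y m)) (omega DJ eps u0 beta).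
Proof.
move=> DJ_cv y_cv; apply: CV_minus.
  by apply: Un_cv_vsum => i; apply: Un_cv_sq; apply: Un_cv_vsum => j; apply: CV_mult.
by apply: Un_cv_sq; apply: Un_cv_vsum => j; apply: CV_mult => //; exact: Un_cv_const.
Qed.

Lemma limit_of_solutions (w : nat -> vec n) (u0 : vec n) (y : nat -> vec k) (beta : vec k) :
  (forall j i, Un_cv (fun m => DJ (w m) j i) (DJ u0 j i)) ->
  (forall m, is_solution DJ eps (w m) (y m)) ->
  (forall j, Un_cv (fun m => y m j) (beta j)) ->
  is_solution DJ eps u0 beta.
Proof.
move=> DJ_cv y_sol y_cv.
have beta_simplex : in_simplex beta.
  split=> [j|].
    apply: (Un_cv_le (u := fun _ => 0)) (Un_cv_const 0) (y_cv j) => m.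
    exact: ((y_sol m).1.1 j).
  apply: (UL_sequence (fun m => vsum (y m))); first exact: Un_cv_vsum.
  by apply: (Un_cv_ext (u := fun _ => 1)) (Un_cv_const 1) => m; rewrite (y_sol m).1.2.
split=> // b b_simplex.
apply: (Un_cv_le (u := fun m => omega DJ eps (w m) (y m)) (w := fun m => omega DJ eps (w m) b)).
- by move=> m; apply: (y_sol m).2.
- exact: omega_seq_cont.
- by apply: omega_seq_cont => // j; exact: Un_cv_const.
Qed.

(* Uniqueness of the solution at u0 makes a selection of solutions continuous at u0:
   otherwise a sequence of solutions staying away from A u0 would, by compactness of the
   simplex, have a subsequence converging to a second solution at u0. *)
Lemma solution_cont_within (B : vec n -> Prop) (A : vec n -> vec k) (u0 : vec n) :
  (forall j i, cont_within B (fun v => DJ v j i) u0) ->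
  (forall u, B u -> is_solution DJ eps u (A u)) ->
  (forall b, is_solution DJ eps u0 b -> forall j, b j = A u0 j) ->
  forall j, cont_within B (fun v => A v j) u0.
Proof.
move=> DJ_cont A_sol A_unique j e e_pos; apply: NNPP => not_cont.
have inv_pos m : 0 < / INR m.+1 by apply: Rinv_0_lt_compat; apply: lt_0_INR; lia.
have far d : 0 < d -> exists v, B v /\ vnorm (vsub v u0) < d /\ e <= Rabs (A v j - A u0 j).
  move=> d_pos; apply: NNPP => no_far; apply: not_cont; exists d; split=> // v Bv vd.
  by apply: Rnot_le_lt => far_v; apply: no_far; exists v.
have [w w_spec] := choice (fun m v =>
  B v /\ vnorm (vsub v u0) < / INR m.+1 /\ e <= Rabs (A v j - A u0 j)) (fun m => far _ (inv_pos m)).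
have [psi [beta [psi_incr beta_cv]]] := @unit_cube_extraction k (fun m => A (w m))
  (fun m j' => simplex_coord j' (A_sol _ (w_spec m).1).1).
have w_cv : Un_cv (fun m => vnorm (vsub (w (psi m)) u0)) 0.
  move=> e' e'_pos; have [N [NE N_pos]] := archimed_cor1 e' e'_pos; exists N => m mN.
  rewrite /Rdist Rminus_0_r Rabs_pos_eq; last exact: vnorm_ge0.
  apply: (Rlt_trans _ _ _ (w_spec (psi m)).2.1); apply: Rle_lt_trans NE.
  apply: Rinv_le_contravar; [apply: lt_0_INR; lia | apply: le_INR].
  by have := extraction_ge psi_incr m; lia.
have beta_sol : is_solution DJ eps u0 beta.
  apply: (limit_of_solutions (w := fun m => w (psi m)) (y := fun m => A (w (psi m)))) => //.
  - move=> j' i; apply: (cont_within_seq (DJ_cont j' i)) w_cv.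
    by move=> m; exact: (w_spec (psi m)).1.
  - by move=> m; apply: A_sol; exact: (w_spec (psi m)).1.
have [N HN] := beta_cv j e e_pos; have := HN N (le_n N).
have := (w_spec (psi N)).2.2; rewrite /Rdist (A_unique _ beta_sol j); lra.
Qed.

End Problem.

(* If t = s + L + E with L of first order and E small relative to x = |h|, then
   t^2 - s^2 - 2 s L = 2 s E + (L + E)^2 is small relative to x. *)
Lemma square_expansion_bound t s L S B eta x :
  0 <= x -> 0 <= B -> 0 <= eta <= 1 ->
  Rabs s <= S -> Rabs L <= B * x -> Rabs (t - s - L) <= eta * x ->
  Rabs (t ^ 2 - s ^ 2 - 2 * s * L) <= (2 * S * eta + (B + 1) ^ 2 * x) * x.
Proof.
move=> x_ge0 B_ge0 eta01 sS LB; set E := t - s - L => E_eta.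
have -> : t ^ 2 - s ^ 2 - 2 * s * L = 2 * s * E + (L + E) ^ 2 by rewrite /E; ring.
apply: (Rle_trans _ _ _ (Rabs_triang _ _)).
have sE : Rabs (2 * s * E) <= 2 * S * eta * x.
  rewrite !Rabs_mult Rabs_pos_eq; last lra.
  by have := Rabs_pos s; have := Rabs_pos E; nra.
have LE : Rabs (L + E) <= (B + 1) * x by have := Rabs_triang L E; nra.
have LE2 : (L + E) ^ 2 <= ((B + 1) * x) ^ 2.
  by rewrite -(pow2_abs (L + E)); apply: pow_incr; split => //; exact: Rabs_pos.
rewrite (Rabs_pos_eq ((L + E) ^ 2)); last exact: pow2_ge_0.
lra.
Qed.

Section UniformDifferentiability.
Variables (n k : nat) (DJ : vec n -> 'I_k -> 'I_n -> R) (eps : vec k).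
(* dD j i u is the gradient at u of the entry u |-> DJ u j i *)
Variable dD : 'I_k -> 'I_n -> vec n -> vec n.

Definition omega_grad (u : vec n) (a : vec k) : vec n :=
  fun l => vsum (fun i => 2 * jac_tmul DJ u a i * vsum (fun j => a j * dD j i u l)).

Lemma omega_grad_dot (u : vec n) (a : vec k) (h : vec n) :
  dot (omega_grad u a) h =
  vsum (fun i => 2 * jac_tmul DJ u a i * vsum (fun j => a j * dot (dD j i u) h)).
Proof.
rewrite /dot /omega_grad.
under vsum_ext => l do rewrite -vsum_scalr.
rewrite vsum_exch; apply: vsum_ext => i.
under vsum_ext => l do rewrite Rmult_assoc -vsum_scalr.
rewrite vsum_scal; congr (_ * _); rewrite vsum_exch; apply: vsum_ext => j.
by rewrite -vsum_scal; apply: vsum_ext => l; ring.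
Qed.

Variable u0 : vec n.
Hypothesis DJ_diff : forall j i, has_grad (fun v => DJ v j i) u0 (dD j i u0).

Lemma jac_tmul_expansion eta : 0 < eta -> exists d, 0 < d /\
  forall h, vnorm h < d -> forall a, in_simplex a -> forall i,
  Rabs (jac_tmul DJ (vadd u0 h) a i - jac_tmul DJ u0 a i
        - vsum (fun j => a j * dot (dD j i u0) h)) <= eta * vnorm h.
Proof.
move=> eta_pos.
have [d [d_pos DJd]] := @fin_common_radius _ (fun (p : 'I_k * 'I_n) d => forall h, vnorm h < d ->
  Rabs (DJ (vadd u0 h) p.1 p.2 - DJ u0 p.1 p.2 - dot (dD p.1 p.2 u0) h) <= eta * vnorm h)
  (fun p d d' dd' P h hd' => P h ltac:(lra)) (fun p => DJ_diff p.1 p.2 eta_pos).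
exists d; split=> // h hd a a_simplex i.
rewrite /jac_tmul -!vsum_sub.
under vsum_ext => j do have -> : DJ (vadd u0 h) j i * a j - DJ u0 j i * a j
    - a j * dot (dD j i u0) h = (DJ (vadd u0 h) j i - DJ u0 j i - dot (dD j i u0) h) * a j by ring.
by apply: convex_comb_bound => // j; apply: (DJd (j, i)).
Qed.

(* omega_u(a) is differentiable at u0 with gradient omega_grad u0 a, uniformly for a
   in the simplex; this is the only regularity of omega that Danskin's argument needs. *)
Lemma omega_unif_diff e : 0 < e -> exists d, 0 < d /\
  forall h, vnorm h < d -> forall a, in_simplex a ->
  Rabs (omega DJ eps (vadd u0 h) a - omega DJ eps u0 a - dot (omega_grad u0 a) h) <= e * vnorm h.
Proof.
move=> e_pos; have n_ge0 := pos_INR n.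
pose e' := e / (INR n + 1); have e'_pos : 0 < e' by apply: Rdiv_lt_0_compat; lra.
have [S [S_ge0 S_bd]] := fin_upper_bound (fun p : 'I_k * 'I_n => Rabs (DJ u0 p.1 p.2)).
have [B [B_ge0 B_bd]] := fin_upper_bound
  (fun p : 'I_k * 'I_n => vsum (fun l => Rabs (dD p.1 p.2 u0 l))).
pose eta := Rmin 1 (e' / (4 * (S + 1))).
have eta_pos : 0 < eta by apply: Rmin_pos; [lra | apply: Rdiv_lt_0_compat; lra].
have eta_le1 : eta <= 1 by apply: Rmin_l.
have eta_le : eta <= e' / (4 * (S + 1)) by apply: Rmin_r.
have S_eta : 2 * S * eta <= e' / 2.
  have -> : e' / 2 = 2 * (S + 1) * (e' / (4 * (S + 1))) by field; lra.
  nra.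
have [d1 [d1_pos E_bd]] := jac_tmul_expansion eta_pos.
have B1_pos : 0 < (B + 1) ^ 2 by apply: pow_lt; lra.
pose d2 := e' / (2 * (B + 1) ^ 2); have d2_pos : 0 < d2 by apply: Rdiv_lt_0_compat; lra.
exists (Rmin d1 d2); split=> [|h hd a a_simplex]; first exact: Rmin_pos.
have h1 := Rlt_le_trans _ _ _ hd (Rmin_l _ _); have h2 := Rlt_le_trans _ _ _ hd (Rmin_r _ _).
have h_ge0 := vnorm_ge0 h.
pose s i := jac_tmul DJ u0 a i; pose L i := vsum (fun j => a j * dot (dD j i u0) h).
have -> : omega DJ eps (vadd u0 h) a - omega DJ eps u0 a - dot (omega_grad u0 a) h =
    vsum (fun i => jac_tmul DJ (vadd u0 h) a i ^ 2 - s i ^ 2 - 2 * s i * L i).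
  by rewrite omega_grad_dot /omega !vsum_sub /s /L /jac_tmul; ring.
eapply Rle_trans; first exact: vsum_abs.
apply: (Rle_trans _ (vsum (fun _ => e' * vnorm h))).
  apply: vsum_le => i.
  have s_bd : Rabs (s i) <= S by apply: convex_comb_bound => // j; apply: (S_bd (j, i)).
  have L_bd : Rabs (L i) <= B * vnorm h.
    rewrite /L; under vsum_ext => j do rewrite Rmult_comm.
    apply: convex_comb_bound => // j.
    apply: (Rle_trans _ _ _ (dot_bound _ _)); apply: Rmult_le_compat_r => //.
    exact: (B_bd (j, i)).
  have h_small : (B + 1) ^ 2 * vnorm h <= e' / 2.
    have -> : e' / 2 = (B + 1) ^ 2 * d2 by rewrite /d2; field; lra.
    by apply: Rmult_le_compat_l; lra.
  have E_i := E_bd h h1 a a_simplex i.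
  apply: (Rle_trans _ _ _ (square_expansion_bound h_ge0 B_ge0 _ s_bd L_bd E_i)).
    lra.
  nra.
rewrite vsum_const.
have -> : INR n * (e' * vnorm h) = INR n / (INR n + 1) * (e * vnorm h) by rewrite /e'; field; lra.
have : INR n / (INR n + 1) <= 1.
  by apply: (Rmult_le_reg_r (INR n + 1)); [lra | rewrite /Rdiv Rmult_assoc Rinv_l; lra].
have : 0 <= e * vnorm h by apply: Rmult_le_pos; lra.
nra.
Qed.

End UniformDifferentiability.

(* The proof squeezes
   g (u0 + h) - g u0 between the increments of f (.) (A (u0 + h)) and f (.) (A u0). *)
Lemma danskin n (T : Type) (S : T -> Prop) (f : vec n -> T -> R) (G : T -> vec n)
    (U : vec n -> Prop) (A : vec n -> T) (g : vec n -> R) (u0 : vec n) :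
  is_open U -> U u0 ->
  (forall u, U u -> S (A u) /\ forall b, S b -> f u (A u) <= f u b) ->
  (forall u, U u -> g u = f u (A u)) ->
  (forall e, 0 < e -> exists d, 0 < d /\ forall h, vnorm h < d -> forall a, S a ->
     Rabs (f (vadd u0 h) a - f u0 a - dot (G a) h) <= e * vnorm h) ->
  (forall l, cont_within U (fun v => G (A v) l) u0) ->
  has_grad g u0 (G (A u0)).
Proof.
move=> U_open Uu0 A_min g_eq f_diff G_cont e e_pos.
have [d1 [d1_pos f_d1]] := f_diff (e / 2) ltac:(lra).
pose dG v := vsum (fun l => Rabs (G (A v) l - G (A u0) l)).
have dG_cont : cont_within U dG u0.
  apply: cont_within_sum => l; apply: cont_within_abs.
  by apply: cont_within_sub => //; exact: cont_within_const.
have [d2 [d2_pos dG_d2]] := dG_cont (e / 2) ltac:(lra).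
have dG_u0 : dG u0 = 0.
  rewrite /dG (vsum_ext (g := fun _ => 0)) => [|l]; last by rewrite Rminus_diag Rabs_R0.
  by rewrite vsum_const; ring.
have [d3 [d3_pos U_d3]] := U_open u0 Uu0.
exists (Rmin d1 (Rmin d2 d3)); split=> [|h hd]; first by repeat apply: Rmin_pos.
have h1 := Rlt_le_trans _ _ _ hd (Rmin_l _ _).
have h23 := Rlt_le_trans _ _ _ hd (Rmin_r _ _).
have h2 := Rlt_le_trans _ _ _ h23 (Rmin_l _ _); have h3 := Rlt_le_trans _ _ _ h23 (Rmin_r _ _).
have Uv : U (vadd u0 h) by apply: U_d3; rewrite vsub_vadd.
have [Av_S Av_min] := A_min _ Uv; have [Au0_S Au0_min] := A_min _ Uu0.
have min_v := Av_min _ Au0_S; have min_u0 := Au0_min _ Av_S.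
have incr_u0 := f_d1 h h1 _ Au0_S; have incr_v := f_d1 h h1 _ Av_S.
have dG_h : Rabs (dot (G (A (vadd u0 h))) h - dot (G (A u0)) h) <= e / 2 * vnorm h.
  rewrite dot_sub; apply: (Rle_trans _ _ _ (dot_bound _ _)).
  apply: Rmult_le_compat_r; first exact: vnorm_ge0.
  have := dG_d2 _ Uv ltac:(rewrite vsub_vadd; exact: h2); rewrite dG_u0 Rminus_0_r.
  by have := Rle_abs (dG (vadd u0 h)); rewrite /dG; lra.
rewrite (g_eq _ Uv) (g_eq _ Uu0); apply: Rabs_le.
move: incr_u0 incr_v dG_h min_v min_u0; set v := vadd u0 h => incr_u0 incr_v dG_h min_v min_u0.
have := Rle_abs (- (f v (A v) - f u0 (A v) - dot (G (A v)) h)).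
have := Rle_abs (- (dot (G (A v)) h - dot (G (A u0)) h)).
have := Rle_abs (f v (A u0) - f u0 (A u0) - dot (G (A u0)) h).
rewrite !Rabs_Ropp; lra.
Qed.

(* The gradient of omega is continuous in (u, a) whenever DJ, its derivatives and the
   weights are: it is a polynomial expression in these quantities.  [w] is either the
   identity (continuity of u |-> grad phi(u)) or constant (Danskin's hypothesis). *)
Lemma omega_grad_cont_within n k (DJ : vec n -> 'I_k -> 'I_n -> R)
    (dD : 'I_k -> 'I_n -> vec n -> vec n) (P : vec n -> Prop) (w : vec n -> vec n)
    (A : vec n -> vec k) (u0 : vec n) (l : 'I_n) :
  (forall j i, cont_within P (fun v => DJ (w v) j i) u0) ->
  (forall j i, cont_within P (fun v => dD j i (w v) l) u0) ->
  (forall j, cont_within P (fun v => A v j) u0) ->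
  cont_within P (fun v => omega_grad DJ dD (w v) (A v) l) u0.
Proof.
move=> DJ_cont dD_cont A_cont; apply: cont_within_sum => i.
apply: cont_within_mul; first apply: cont_within_mul; first exact: cont_within_const.
  by apply: cont_within_sum => j; apply: cont_within_mul.
by apply: cont_within_sum => j; apply: cont_within_mul.
Qed.

Lemma open_box_in_ball n (c : vec n) r : 0 < r ->
  exists U : vec n -> Prop, is_open U /\ U c /\ forall v, U v -> vnorm (vsub v c) < r.
Proof.
move=> r_pos; have n_ge0 := pos_INR n.
pose rho := r / (INR n + 1); have rho_pos : 0 < rho by apply: Rdiv_lt_0_compat; lra.
exists (fun v => forall i, Rabs (v i - c i) < rho); split; [|split].
- move=> v v_box.
  have [d [d_pos d_le]] : exists d, 0 < d /\ forall i, d <= rho - Rabs (v i - c i).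
    apply: (@fin_common_radius _ (fun i d => d <= rho - Rabs (v i - c i))) => [i d d'|i]; first lra.
    by exists (rho - Rabs (v i - c i)); split; [have := v_box i; lra | exact: Rle_refl].
  exists d; split=> // w wv i.
  have := coord_le_vnorm (vsub w v) i; have := Rabs_triang (w i - v i) (v i - c i).
  have -> : w i - v i + (v i - c i) = w i - c i by ring.
  by have := d_le i; move: wv; rewrite /vsub; lra.
- by move=> i; rewrite Rminus_diag Rabs_R0.
- move=> v v_box; apply: (Rle_lt_trans _ _ _ (vnorm_le_l1 _)).
  apply: (Rle_lt_trans _ (vsum (fun _ => rho))).
    by apply: vsum_le => i; apply: Rlt_le; exact: v_box.
  rewrite vsum_const /rho.
  have -> : INR n * (r / (INR n + 1)) = r - r / (INR n + 1) by field; lra.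
  by move: rho_pos; rewrite /rho; lra.
Qed.

Definition solution_sel n k (DJ : vec n -> 'I_k -> 'I_n -> R) (eps : vec k) (u : vec n) : vec k :=
  epsilon (inhabits (fun _ => 0)) (is_solution DJ eps u).

Section Selection.
Variables (n k : nat) (DJ : vec n -> 'I_k -> 'I_n -> R) (eps : vec k) (u : vec n).
Hypothesis solvable : uniquely_solvable DJ eps u.

Lemma solution_sel_spec : is_solution DJ eps u (solution_sel DJ eps u) /\
  forall b, is_solution DJ eps u b -> forall j, b j = solution_sel DJ eps u j.
Proof.
have [a [a_sol a_unique]] := solvable.
have sel_sol : is_solution DJ eps u (solution_sel DJ eps u) by apply: epsilon_spec; exists a.
by split=> // b b_sol j; rewrite (a_unique _ b_sol) (a_unique _ sel_sol).
Qed.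

Lemma phi_solution_sel : phi DJ eps u = omega DJ eps u (solution_sel DJ eps u).
Proof.
have [sel_sol sel_unique] := solution_sel_spec.
have [a [a_sol <-]] : is_min_value DJ eps u (phi DJ eps u).
  by apply: epsilon_spec; exists (omega DJ eps u (solution_sel DJ eps u)), (solution_sel DJ eps u).
by congr (omega _ _ _); apply: functional_extensionality; exact: sel_unique.
Qed.

End Selection.

Lemma jacobian_gradients n k (J : vec n -> vec k) (DJ : vec n -> 'I_k -> 'I_n -> R) :
  C2_with_jacobian J DJ -> exists dD : 'I_k -> 'I_n -> vec n -> vec n,
    (forall j i u, has_grad (fun v => DJ v j i) u (dD j i u)) /\
    (forall j i l, continuous_on (@full n) (fun u => dD j i u l)).
Proof.
move=> [_ DJ_C1].
have [dD dD_spec] := choice (fun (p : 'I_k * 'I_n) (dg : vec n -> vec n) =>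
  (forall u, has_grad (fun v => DJ v p.1 p.2) u (dg u)) /\
  (forall l, continuous_on (@full n) (fun u => dg u l)))
  (fun p => let: ex_intro dg (conj dg_grad dg_cont) := DJ_C1 p.1 p.2 in
            ex_intro _ dg (conj (fun u => dg_grad u I) dg_cont)).
exists (fun j i => dD (j, i)); split=> [j i|j i].
- exact: (dD_spec (j, i)).1.
- exact: (dD_spec (j, i)).2.
Qed.

Theorem mainTheorem5 (n k : nat) (J : vec n -> vec k) (DJ : vec n -> 'I_k -> 'I_n -> R)
  (eps : vec k) (ubar : vec n) (abar : vec k) :
  C2_with_jacobian J DJ ->
  (forall i, 0 <= eps i) ->
  phi DJ eps ubar = 0 ->
  is_solution DJ eps ubar abar ->
  (forall b, is_solution DJ eps ubar b -> forall i, b i = abar i) ->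
  (forall i, 0 < abar i) ->
  (exists r, 0 < r /\ forall u, vnorm (vsub u ubar) < r -> uniquely_solvable DJ eps u) ->
  exists U : vec n -> Prop,
    is_open U /\ U ubar /\ C1_on U (phi DJ eps).
Proof.
move=> J_C2 _ _ _ _ _ [r [r_pos solvable]].
have [dD [dD_grad dD_cont]] := jacobian_gradients J_C2.
have [U [U_open [U_ubar U_ball]]] := open_box_in_ball ubar r_pos.
have U_solvable u : U u -> uniquely_solvable DJ eps u by move=> /U_ball /solvable.
pose A := solution_sel DJ eps.
have DJ_cont P j i u0 : cont_within P (fun v => DJ v j i) u0.
  exact: has_grad_cont_within (dD_grad j i u0).
have A_cont u0 j : U u0 -> cont_within U (fun v => A v j) u0.
  move=> Uu0; apply: solution_cont_within => // [u Uu|].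
    exact: (solution_sel_spec (U_solvable u Uu)).1.
  exact: (solution_sel_spec (U_solvable u0 Uu0)).2.
exists U; split=> //; split=> //.
exists (fun u => omega_grad DJ dD u (A u)); split=> [u0 Uu0 | l u0 Uu0].
- apply: (danskin (S := @in_simplex k) (f := omega DJ eps) (G := omega_grad DJ dD u0) (A := A)
    U_open Uu0) => [u Uu | u Uu | |l].
  + exact: (solution_sel_spec (U_solvable u Uu)).1.
  + exact: phi_solution_sel (U_solvable u Uu).
  + exact: omega_unif_diff.
  + apply: (omega_grad_cont_within (w := fun _ => u0)) => [j i|j i|j].
    * exact: cont_within_const.
    * exact: cont_within_const.
    * exact: A_cont.
- apply: (omega_grad_cont_within (w := fun v => v)) => [j i|j i|j].
  + exact: DJ_cont.
  + exact: (cont_within_sub_dom (fun _ _ => I) (dD_cont j i l u0 I)).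
  + exact: A_cont.
Qed.
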